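(* Let $\{x_k\}$ be the random sequence generated by the SKM method. Define $\bar{x}_k = \frac{1}{k}\sum_{l=1}^{k} x_l$. Then for any $0 < \delta < 2$, $$\mathbb{E}[f(\bar{x}_k)] \leq \frac{d(x_0,P)^2}{2\delta k(2-\delta)}.$$
   Context: Linear feasibility problem $Ax \leq b$ with $A \in \mathbb{R}^{m\times n}$, $b \in \mathbb{R}^m$, assumed consistent, with rows $a_i^T$ normalized ($\|a_i\|=1$). $P = \{x : Ax \leq b\}$, $\mathcal{P}(x)$ the Euclidean projection onto $P$, $d(x,P) = \|x-\mathcal{P}(x)\|$. Sampling: at each iteration a set $\tau$ of $\beta$ rows is chosen uniformly at random among all $\binom{m}{\beta}$ subsets and $i^* = \arg\max_{i\in\tau}(a_i^Tx-b_i)^+$; $\mathbb{E}_{\mathbb{S}}$ denotes expectation over this sampling. $f(x) = \mathbb{E}_{\mathbb{S}}\big[\tfrac12|(a_{i^*}^Tx-b_{i^*})^+|^2\big]$. SKM method (Sampling Kaczmarz Motzkin): starting from $x_0$, at each iteration sample $\tau_k$, pick $i^*$ at $x_k$, and set $x_{k+1} = x_k - \delta(a_{i^*}^Tx_k-b_{i^*})^+a_{i^*}$. *)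

From HB Require Import structures.
From mathcomp Require Import all_boot all_order all_algebra.
From mathcomp Require Import classical_sets reals.
Set Implicit Arguments. Unset Strict Implicit. Unset Printing Implicit Defensive.
Import Order.TTheory GRing.Theory Num.Theory.
Local Open Scope ring_scope.
Local Open Scope classical_set_scope.

Section SKM.
Variables (R : realType) (m n : nat) (A : 'M[R]_(m, n)) (b : 'cV[R]_m).

Definition pos (t : R) : R := Num.max t 0.

Definition res (x : 'cV[R]_n) (i : 'I_m) : R := \sum_(j < n) A i j * x j 0 - b i 0.

Definition norm2 (v : 'cV[R]_n) : R := \sum_(j < n) v j 0 ^+ 2.

Definition feasP : set 'cV[R]_n := [set x | forall i, res x i <= 0].

Definition distP (x : 'cV[R]_n) : R :=
  inf [set Num.sqrt (norm2 (x - y)) | y in feasP].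

Definition maxres (tau : {set 'I_m}) (x : 'cV[R]_n) : R :=
  \big[Num.max/0]_(i in tau) pos (res x i).

(* f(x) = E_S[ 1/2 |(a_{i*}^T x - b_{i*})^+|^2 ], tau uniform among beta-subsets *)
Definition fobj (beta : nat) (x : 'cV[R]_n) : R :=
  (\sum_(tau : {set 'I_m} | #|tau| == beta) (2%:R)^-1 * maxres tau x ^+ 2)
  / ('C(m, beta))%:R.

Definition argmax_rule (beta : nat) (sel : {set 'I_m} -> 'cV[R]_n -> 'I_m) : Prop :=
  forall (tau : {set 'I_m}) (x : 'cV[R]_n), #|tau| = beta ->
    sel tau x \in tau /\ (forall j, j \in tau -> pos (res x j) <= pos (res x (sel tau x))).

Fixpoint skm_iter (sel : {set 'I_m} -> 'cV[R]_n -> 'I_m) (delta : R)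
    (x0 : 'cV[R]_n) (t : nat -> {set 'I_m}) (l : nat) : 'cV[R]_n :=
  match l with
  | 0 => x0
  | l'.+1 =>
      let x := skm_iter sel delta x0 t l' in
      let i := sel (t l') x in
      x - (delta * pos (res x i)) *: (row i A)^T
  end.

Definition hist {k : nat} (s : {ffun 'I_k -> {set 'I_m}}) (l : nat) : {set 'I_m} :=
  odflt (finset.set0 : {set 'I_m}) (omap s (insub l)).

Definition xbar sel delta x0 (t : nat -> {set 'I_m}) (k : nat) : 'cV[R]_n :=
  (k%:R)^-1 *: \sum_(1 <= l < k.+1) skm_iter sel delta x0 t l.

(* E[f(bar x_k)]: expectation over i.i.d. uniform beta-subsets tau_0..tau_{k-1} *)
Definition expected_f_xbar beta sel delta x0 (k : nat) : R :=
  (\sum_(s : {ffun 'I_k -> {set 'I_m}} | [forall l, #|s l| == beta])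
      fobj beta (xbar sel delta x0 (hist s) k))
  / (('C(m, beta))%:R ^+ k).

End SKM.

From HB Require Import structures.
From mathcomp Require Import all_boot all_order all_algebra.
From mathcomp Require Import classical_sets reals.
From mathcomp Require Import lra ring.
Import Order.TTheory GRing.Theory Num.Theory.
Set Implicit Arguments. Unset Strict Implicit. Unset Printing Implicit Defensive.
Local Open Scope ring_scope.

(* One SKM step from x along the selected row i brings x closer to every
   feasible y: since a_i^T y <= b_i, the cross term satisfies
   (a_i^T x - b_i)^+ a_i^T (x - y) >= ((a_i^T x - b_i)^+)^2, hence
   |x' - y|^2 <= |x - y|^2 - delta (2 - delta) ((a_i^T x - b_i)^+)^2.
   Averaging over the sampled subset turns the last term into
   2 delta (2 - delta) f(x); conditioning on the first sample restarts the
   method from x_1, so induction on k gives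
   2 delta (2 - delta) sum_(l <= k) E f(x_l) <= |x_0 - y|^2.
   Since f is convex (a mean of squares of maxima of positive parts of affine
   maps), f(xbar_k) <= (1/k) sum_(1 <= l <= k) f(x_l); the infimum over
   y in P then gives d(x_0, P)^2. *)

Section Mean.
Variables (R : numFieldType) (I : finType).

Definition mean (P : {pred I}) (F : I -> R) : R := (\sum_(i in P) F i) / #|P|%:R.

Lemma mean_le (P : {pred I}) (F G : I -> R) :
  (forall i, i \in P -> F i <= G i) -> mean P F <= mean P G.
Proof. by move=> FG; rewrite ler_wpM2r ?invr_ge0 //; exact: ler_sum. Qed.

Lemma mean_ge0 (P : {pred I}) (F : I -> R) :
  (forall i, i \in P -> 0 <= F i) -> 0 <= mean P F.
Proof. by move=> F0; rewrite divr_ge0 //; exact: sumr_ge0. Qed.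

Lemma meanZ (P : {pred I}) (a : R) (F : I -> R) :
  mean P (fun i => a * F i) = a * mean P F.
Proof. by rewrite /mean -mulr_sumr mulrA. Qed.

Lemma meanD (P : {pred I}) (F G : I -> R) :
  mean P (fun i => F i + G i) = mean P F + mean P G.
Proof. by rewrite /mean big_split mulrDl. Qed.

Lemma mean_sum (J : Type) (r : seq J) (P : {pred I}) (F : J -> I -> R) :
  mean P (fun i => \sum_(j <- r) F j i) = \sum_(j <- r) mean P (F j).
Proof. by rewrite /mean exchange_big mulr_suml. Qed.

Lemma mean_cst (P : {pred I}) (c : R) : (0 < #|P|)%N -> mean P (fun _ => c) = c.
Proof.
move=> P0; rewrite /mean sumr_const -[c *+ _]mulr_natr mulfK //.
by rewrite pnatr_eq0 -lt0n.
Qed.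

End Mean.

Section FfunCons.
Variable T : finType.

Definition scons (x : T) (t : nat -> T) (j : nat) : T :=
  if j is j'.+1 then t j' else x.

Definition ffcons k (x : T) (s : {ffun 'I_k -> T}) : {ffun 'I_k.+1 -> T} :=
  [ffun i => if unlift ord0 i is Some j then s j else x].

Lemma ffcons_bij k : bijective (fun p : T * {ffun 'I_k -> T} => ffcons p.1 p.2).
Proof.
exists (fun s : {ffun 'I_k.+1 -> T} => (s ord0, [ffun j : 'I_k => s (lift ord0 j)])).
  case=> x s; rewrite /ffcons /= ffunE unlift_none; congr pair.
  by apply/ffunP => j; rewrite !ffunE liftK.
move=> s; apply/ffunP => i; rewrite /ffcons /= !ffunE.
by case: unliftP => [j ->|->] //; rewrite ffunE.
Qed.

Lemma ffcons_on k (P : {pred T}) x (s : {ffun 'I_k -> T}) :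
  (ffcons x s \in ffun_on P) = (x \in P) && (s \in ffun_on P).
Proof.
apply/ffun_onP/andP => [sP | [xP /ffun_onP sP] i].
  split; first by have := sP ord0; rewrite ffunE unlift_none.
  by apply/ffun_onP => j; have := sP (lift ord0 j); rewrite ffunE liftK.
by rewrite ffunE; case: unliftP.
Qed.

Lemma mean_ffcons (R : numFieldType) k (P : {pred T}) (F : {ffun 'I_k.+1 -> T} -> R) :
  mean (ffun_on P) F =
  mean P (fun x => mean (ffun_on P : {pred {ffun 'I_k -> T}}) (fun s => F (ffcons x s))).
Proof.
rewrite /mean !card_ffun_on !card_ord expnS natrM invfM mulrA -big_distrl /= mulrAC.
congr (_ * _ * _).
rewrite (reindex (fun p : T * {ffun 'I_k -> T} => ffcons p.1 p.2)) /=; last first.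
  by apply: onW_bij; exact: ffcons_bij.
by rewrite pair_big /=; apply: eq_bigl => -[x s]; rewrite ffcons_on.
Qed.

End FfunCons.

Lemma jensen_sqr (R : realFieldType) (J : Type) (r : seq J) (w a : J -> R) :
  (forall j, 0 <= w j) -> \sum_(j <- r) w j = 1 ->
  (\sum_(j <- r) w j * a j) ^+ 2 <= \sum_(j <- r) w j * a j ^+ 2.
Proof.
move=> w0 w1.
have expand c : \sum_(j <- r) w j * (a j - c) ^+ 2 =
    \sum_(j <- r) w j * a j ^+ 2 - 2 * c * \sum_(j <- r) w j * a j
    + c ^+ 2 * \sum_(j <- r) w j.
  by rewrite !mulr_sumr -sumrB -big_split; apply: eq_bigr => j _ /=; ring.
have := expand (\sum_(j <- r) w j * a j); rewrite w1.
(* the weighted variance is nonnegative *)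
have : 0 <= \sum_(j <- r) w j * (a j - \sum_(j <- r) w j * a j) ^+ 2.
  by apply: sumr_ge0 => j _; rewrite mulr_ge0 ?sqr_ge0.
nra.
Qed.

Section Residuals.
Variables (R : realType) (m n : nat) (A : 'M[R]_(m, n)) (b : 'cV[R]_m).

Local Notation subsets beta := [pred tau : {set 'I_m} | #|tau| == beta].

Lemma pos_ge0 (t : R) : 0 <= pos t.
Proof. by rewrite /pos le_max lexx orbT. Qed.

Lemma le_pos (t : R) : t <= pos t.
Proof. by rewrite /pos le_max lexx. Qed.

Lemma pos_mul_id (t : R) : pos t * t = pos t ^+ 2.
Proof. by rewrite /pos; case: ler0P => _; rewrite expr2 ?mul0r. Qed.

Lemma norm2_ge0 (v : 'cV[R]_n) : 0 <= norm2 v.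
Proof. by apply: sumr_ge0 => j _; exact: sqr_ge0. Qed.

Lemma maxres_ge0 (tau : {set 'I_m}) (x : 'cV[R]_n) : 0 <= maxres A b tau x.
Proof. by apply: bigmax_ge_id. Qed.

Lemma pos_le_maxres (tau : {set 'I_m}) x i :
  i \in tau -> pos (res A b x i) <= maxres A b tau x.
Proof. by move=> i_tau; rewrite /maxres (bigD1 i) //= le_max lexx. Qed.

Lemma res_wsum (J : Type) (r : seq J) (w : J -> R) (X : J -> 'cV[R]_n) i :
  \sum_(j <- r) w j = 1 ->
  res A b (\sum_(j <- r) w j *: X j) i = \sum_(j <- r) w j * res A b (X j) i.
Proof.
rewrite /res => w1.
under [RHS]eq_bigr do rewrite mulrBr mulr_sumr.
rewrite sumrB -mulr_suml w1 mul1r exchange_big /=; congr (_ - _).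
by apply: eq_bigr => k _; rewrite summxE mulr_sumr; apply: eq_bigr => j _; rewrite !mxE; ring.
Qed.

Lemma pos_wsum_le (J : Type) (r : seq J) (w c : J -> R) :
  (forall j, 0 <= w j) -> pos (\sum_(j <- r) w j * c j) <= \sum_(j <- r) w j * pos (c j).
Proof.
move=> w0; rewrite {1}/pos ge_max; apply/andP; split.
  by apply: ler_sum => j _; rewrite ler_wpM2l ?le_pos.
by apply: sumr_ge0 => j _; rewrite mulr_ge0 ?pos_ge0.
Qed.

Lemma maxres_wsum_le (J : Type) (r : seq J) (w : J -> R) (X : J -> 'cV[R]_n) tau :
  (forall j, 0 <= w j) -> \sum_(j <- r) w j = 1 ->
  maxres A b tau (\sum_(j <- r) w j *: X j) <= \sum_(j <- r) w j * maxres A b tau (X j).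
Proof.
move=> w0 w1; apply: bigmax_le => [|i i_tau].
  by apply: sumr_ge0 => j _; rewrite mulr_ge0 ?maxres_ge0.
rewrite res_wsum //; apply: le_trans (pos_wsum_le _ _ w0) _.
by apply: ler_sum => j _; rewrite ler_wpM2l ?pos_le_maxres.
Qed.

Lemma card_subsets beta : #|subsets beta| = 'C(m, beta).
Proof. by rewrite -cardsE card_draws card_ord. Qed.

Lemma fobj_mean beta x :
  fobj A b beta x = mean (subsets beta) (fun tau => 2^-1 * maxres A b tau x ^+ 2).
Proof. by rewrite /mean card_subsets. Qed.

Lemma fobj_ge0 beta x : 0 <= fobj A b beta x.
Proof.
by rewrite fobj_mean; apply: mean_ge0 => tau _; rewrite mulr_ge0 ?invr_ge0 ?sqr_ge0.
Qed.

Lemma fobj_wsum_le beta (J : Type) (r : seq J) (w : J -> R) (X : J -> 'cV[R]_n) :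
  (forall j, 0 <= w j) -> \sum_(j <- r) w j = 1 ->
  fobj A b beta (\sum_(j <- r) w j *: X j) <= \sum_(j <- r) w j * fobj A b beta (X j).
Proof.
move=> w0 w1; under [X in _ <= X]eq_bigr do rewrite fobj_mean -meanZ.
rewrite fobj_mean -mean_sum; apply: mean_le => tau _.
under [X in _ <= X]eq_bigr do rewrite mulrCA.
rewrite -mulr_sumr ler_wpM2l ?invr_ge0 //.
apply: le_trans _ (jensen_sqr (fun j => maxres A b tau (X j)) w0 w1).
rewrite ler_sqr ?maxres_wsum_le ?nnegrE ?maxres_ge0 //.
by apply: sumr_ge0 => j _; rewrite mulr_ge0 ?maxres_ge0.
Qed.

Lemma le_distP_sqr (c : R) x : (exists y, feasP A b y) -> 0 <= c ->
  (forall y, feasP A b y -> c <= norm2 (x - y)) -> c <= distP A b x ^+ 2.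
Proof.
move=> [y0 feas_y0] c_ge0 c_le.
have sqrt_c_le : Num.sqrt c <= distP A b x.
  apply: lb_le_inf; first by exists (Num.sqrt (norm2 (x - y0))), y0.
  by move=> _ [y feas_y <-]; rewrite ler_sqrt ?norm2_ge0 ?c_le.
rewrite -(sqr_sqrtr c_ge0) !expr2.
by apply: ler_pM => //; exact: sqrtr_ge0.
Qed.

End Residuals.

Lemma hist_ffcons m k tau (s : {ffun 'I_k -> {set 'I_m}}) :
  hist (ffcons tau s) = scons tau (hist s).
Proof.
apply: boolp.funext => -[|j]; rewrite /hist /scons.
  case: insubP => [i _ i0|] //=.
  by rewrite ffunE (_ : i = ord0) ?unlift_none //; apply: val_inj.
case: insubP => [i ltjk ij|]; case: insubP => [i' lti'k i'j|] //=.
- rewrite ffunE (_ : i = lift ord0 i') ?liftK //.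
  by apply: val_inj; rewrite /= ij i'j.
- by rewrite -ltnS ltjk.
- by rewrite ltnS lti'k.
Qed.

Section SKM.
Variables (R : realType) (m n : nat) (A : 'M[R]_(m, n)) (b : 'cV[R]_m).
Variables (beta : nat) (sel : {set 'I_m} -> 'cV[R]_n -> 'I_m) (delta : R).

Hypothesis unit_rows : forall i : 'I_m, \sum_(j < n) A i j ^+ 2 = 1.
Hypothesis sel_argmax : argmax_rule A b beta sel.
Hypothesis le_beta_m : (beta <= m)%N.
Hypothesis delta_gt0 : 0 < delta.
Hypothesis delta_lt2 : delta < 2.

Local Notation subsets := [pred tau : {set 'I_m} | #|tau| == beta].

Definition skm_step (tau : {set 'I_m}) (x : 'cV[R]_n) : 'cV[R]_n :=
  let i := sel tau x in x - (delta * pos (res A b x i)) *: (row i A)^T.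

Lemma skm_iter_scons x0 tau t l :
  skm_iter A b sel delta x0 (scons tau t) l.+1 = skm_iter A b sel delta (skm_step tau x0) t l.
Proof. by elim: l => //= l ->. Qed.

Lemma skm_step_norm2_le tau x y : feasP A b y ->
  norm2 (skm_step tau x - y) <=
  norm2 (x - y) - delta * (2 - delta) * pos (res A b x (sel tau x)) ^+ 2.
Proof.
move=> feas_y; set i := sel tau x; set r := pos (res A b x i).
have expand : norm2 (skm_step tau x - y) = norm2 (x - y)
    - 2 * delta * r * \sum_(j < n) A i j * (x j 0 - y j 0)
    + (delta * r) ^+ 2 * \sum_(j < n) A i j ^+ 2.
  rewrite /norm2 !mulr_sumr -sumrB -big_split /=.
  by apply: eq_bigr => j _; rewrite !mxE -/i -/r; ring.
have inner : \sum_(j < n) A i j * (x j 0 - y j 0) = res A b x i - res A b y i.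
  by rewrite /res; under eq_bigr do rewrite mulrBr; rewrite sumrB; ring.
rewrite expand inner unit_rows mulr1.
have r_res : delta * r * res A b x i = delta * r ^+ 2 by rewrite -mulrA pos_mul_id.
have cross_ge0 : 0 <= delta * r * - res A b y i.
  by rewrite !mulr_ge0 ?(ltW delta_gt0) ?pos_ge0 ?oppr_ge0 //; exact: feas_y.
lra.
Qed.

Definition expectation k (F : (nat -> {set 'I_m}) -> R) : R :=
  mean (ffun_on subsets : {pred {ffun 'I_k -> {set 'I_m}}}) (fun s => F (hist s)).

Lemma expected_f_xbarE x0 k :
  expected_f_xbar A b beta sel delta x0 k =
  expectation k (fun t => fobj A b beta (xbar A b sel delta x0 t k)).
Proof. by rewrite /expectation /mean card_ffun_on card_ord card_subsets natrX. Qed.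

Lemma expectationS k F :
  expectation k.+1 F = mean subsets (fun tau => expectation k (fun t => F (scons tau t))).
Proof.
rewrite /expectation mean_ffcons; congr mean; apply: boolp.funext => tau.
by congr mean; apply: boolp.funext => s; rewrite hist_ffcons.
Qed.

Lemma expectation_cst k c : expectation k (fun _ => c) = c.
Proof.
by rewrite /expectation mean_cst // card_ffun_on card_subsets expn_gt0 bin_gt0 le_beta_m.
Qed.

Lemma maxres_sel (tau : {set 'I_m}) x :
  #|tau| = beta -> maxres A b tau x = pos (res A b x (sel tau x)).
Proof.
move=> card_tau; have [sel_in sel_max] := sel_argmax x card_tau.
apply/eqP; rewrite eq_le pos_le_maxres // andbT.
by apply: bigmax_le; [exact: pos_ge0 | move=> i /sel_max].
Qed.

Lemma mean_skm_step_norm2 x y : feasP A b y ->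
  2 * delta * (2 - delta) * fobj A b beta x
    + mean subsets (fun tau => norm2 (skm_step tau x - y)) <= norm2 (x - y).
Proof.
move=> feas_y; rewrite fobj_mean -meanZ -meanD.
rewrite -[leRHS](mean_cst (P := subsets)) ?card_subsets ?bin_gt0 //.
apply: mean_le => tau /eqP card_tau; rewrite maxres_sel //.
have := skm_step_norm2_le tau x feas_y; lra.
Qed.

Lemma sum_expectation_fobj_le k x0 y : feasP A b y ->
  2 * delta * (2 - delta) *
    \sum_(0 <= l < k.+1) expectation k (fun t => fobj A b beta (skm_iter A b sel delta x0 t l))
  <= norm2 (x0 - y).
Proof.
move=> feas_y; elim: k x0 => [|k IH] x0.
  rewrite big_nat1 (expectation_cst 0 (fobj A b beta x0)).
  have := mean_skm_step_norm2 x0 feas_y.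
  have : 0 <= mean subsets (fun tau => norm2 (skm_step tau x0 - y)).
    by apply: mean_ge0 => tau _; exact: norm2_ge0.
  lra.
rewrite big_nat_recl // (expectation_cst k.+1 (fobj A b beta x0)).
have -> : \sum_(0 <= l < k.+1)
    expectation k.+1 (fun t => fobj A b beta (skm_iter A b sel delta x0 t l.+1)) =
  mean subsets (fun tau => \sum_(0 <= l < k.+1)
    expectation k (fun t => fobj A b beta (skm_iter A b sel delta (skm_step tau x0) t l))).
  rewrite mean_sum; apply: eq_bigr => l _; rewrite expectationS.
  congr mean; apply: boolp.funext => tau; congr expectation; apply: boolp.funext => t.
  by rewrite skm_iter_scons.
rewrite mulrDr -meanZ.
have := mean_le (fun tau (_ : tau \in subsets) => IH (skm_step tau x0)).
have := mean_skm_step_norm2 x0 feas_y.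
lra.
Qed.

Lemma fobj_xbar_le x0 t k : (0 < k)%N ->
  fobj A b beta (xbar A b sel delta x0 t k)
  <= k%:R^-1 * \sum_(1 <= l < k.+1) fobj A b beta (skm_iter A b sel delta x0 t l).
Proof.
move=> k_gt0; rewrite /xbar scaler_sumr mulr_sumr.
apply: (fobj_wsum_le A b beta (w := fun _ => k%:R^-1)) => [_|]; first by rewrite invr_ge0.
by rewrite sumr_const_nat subSS subn0 -[_ *+ k]mulr_natr mulVf // pnatr_eq0 -lt0n.
Qed.

Lemma expected_f_xbar_le x0 y k : (0 < k)%N -> feasP A b y ->
  expected_f_xbar A b beta sel delta x0 k
    <= norm2 (x0 - y) / (2 * delta * k%:R * (2 - delta)).
Proof.
move=> k_gt0 feas_y.
set Ef := expected_f_xbar _ _ _ _ _ _ _.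
set E := fun l => expectation k (fun t => fobj A b beta (skm_iter A b sel delta x0 t l)).
have k_pos : 0 < k%:R :> R by rewrite ltr0n.
have jensen : k%:R * Ef <= \sum_(1 <= l < k.+1) E l.
  rewrite /Ef expected_f_xbarE /E /expectation -mean_sum -meanZ.
  by apply: mean_le => s _; rewrite -ler_pdivlMl // fobj_xbar_le.
have drop_x0 : \sum_(1 <= l < k.+1) E l <= \sum_(0 <= l < k.+1) E l.
  by rewrite [leRHS]big_ltn // lerDr /E (expectation_cst k (fobj A b beta x0)) fobj_ge0.
have c_gt0 : 0 < 2 * delta * (2 - delta) by rewrite !mulr_gt0 // subr_gt0.
rewrite ler_pdivlMr; last by rewrite !mulr_gt0 // subr_gt0.
apply: le_trans (sum_expectation_fobj_le k x0 feas_y).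
rewrite (_ : Ef * _ = 2 * delta * (2 - delta) * (k%:R * Ef)); last by ring.
by apply: ler_wpM2l; [exact: ltW | exact: le_trans jensen drop_x0].
Qed.

End SKM.

Theorem corollary2 (R : realType) (m n : nat) (A : 'M[R]_(m, n)) (b : 'cV[R]_m)
  (beta : nat) (sel : {set 'I_m} -> 'cV[R]_n -> 'I_m) (delta : R)
  (x0 : 'cV[R]_n) (k : nat) :
  (0 < beta <= m)%N ->
  (forall i : 'I_m, \sum_(j < n) A i j ^+ 2 = 1) ->
  (exists x, feasP A b x) ->
  argmax_rule A b beta sel ->
  0 < delta < 2 ->
  (0 < k)%N ->
  expected_f_xbar A b beta sel delta x0 k
    <= distP A b x0 ^+ 2 / (2%:R * delta * k%:R * (2%:R - delta)).
Proof.
(* 0 < beta is implied by argmax_rule. *)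
move=> /andP[_ le_beta_m] unit_rows feasible sel_argmax /andP[delta_gt0 delta_lt2] k_gt0.
have K_gt0 : 0 < 2%:R * delta * k%:R * (2%:R - delta).
  by rewrite !mulr_gt0 ?ltr0n // subr_gt0.
rewrite ler_pdivlMr //; apply: le_distP_sqr => // [|y feas_y].
  rewrite mulr_ge0 ?(ltW K_gt0) // expected_f_xbarE.
  by apply: mean_ge0 => s _; exact: fobj_ge0.
by rewrite -ler_pdivlMr //; exact: expected_f_xbar_le.
Qed.
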